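(* Let $q$ be a polynomial of degree $n$. Then $\mathcal D_\zeta(q)\le n^2\|q\|_{H^2}^2$ for every $\zeta\in\overline{\mathbb D}$.
   Context: $\mathbb D$ is the open unit disk, $H^2$ the Hardy space with $\|\sum c_kz^k\|_{H^2}^2=\sum|c_k|^2$. For $\zeta\in\overline{\mathbb D}$, $\mathcal D_\zeta$ is the set of holomorphic $f$ on $\mathbb D$ of the form $f(z)=a+(z-\zeta)g(z)$ with $g\in H^2$, $a\in\mathbb C$; for such $f$ set $\mathcal D_\zeta(f):=\|g\|_{H^2}^2$. *)

From Stdlib Require Import Reals.
From Coquelicot Require Import Coquelicot.
Open Scope C_scope.

Fixpoint peval (p : nat -> C) (n : nat) (z : C) : C :=
  match n with
  | O => p O
  | S m => peval p m z + p (S m) * Cpow z (S m)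
  end.

Definition H2norm2_poly (p : nat -> C) (n : nat) : R :=
  sum_n (fun k => (Cmod (p k) ^ 2)%R) n.

Definition inH2 (c : nat -> C) : Prop :=
  ex_series (fun k => (Cmod (c k) ^ 2)%R).

Definition H2norm2 (c : nat -> C) : R :=
  Series (fun k => (Cmod (c k) ^ 2)%R).

(* f = a + (z - zeta) g on the unit disk, with g = sum c_k z^k in H^2.
   Then f lies in D_zeta and D_zeta(f) = H2norm2 c (the pair (a,g) is unique
   for zeta in the closed disk). *)
Definition Drep (zeta : C) (f : C -> C) (a : C) (c : nat -> C) : Prop :=
  inH2 c /\
  forall z : C, (Cmod z < 1)%R ->
    exists gz : C,
      @is_series C_AbsRing C_NormedModule (fun k => c k * Cpow z k) gz /\
      f z = a + (z - zeta) * gz.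

From Stdlib Require Import Reals Lia Lra.
From Coquelicot Require Import Coquelicot.

(* Existence: synthetic division of q by z - zeta gives q = q(zeta) + (z - zeta) g
   with g a polynomial, hence in H^2.

   Bound: take any representation q = a + (z - zeta) g, g = sum c_k z^k in H^2.
   1. Comparing coefficients (identity theorem for power series on the disk,
      proved on the real diameter) gives c_k = zeta c_(k+1) + p_(k+1) for all k.
   2. For k >= n this says |c_k| <= |c_(k+1)|; as |c_k|^2 is summable, c_k -> 0,
      so c_k = 0 for k >= n.
   3. Unrolling the recursion downwards from c_n = 0 gives
      |c_j| <= |p_1| + ... + |p_n|, so |c_j|^2 <= n ||q||^2 by Cauchy-Schwarz.
   4. Only c_0, ..., c_(n-1) are nonzero, so D_zeta(q) = sum |c_j|^2 <= n^2 ||q||^2. *)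

Lemma is_series_finite {K : AbsRing} {V : NormedModule K} (f : nat -> V) (N : nat) :
  (forall k, (N < k)%nat -> f k = zero) -> is_series f (sum_n f N).
Proof.
  intros hf. unfold is_series.
  apply filterlim_ext_loc with (fun _ => sum_n f N); [|apply filterlim_const].
  exists N. intros M hM. induction M as [|M IH].
  - now replace N with 0%nat by lia.
  - destruct (Nat.eq_dec N (S M)) as [->|hne]; [reflexivity|].
    rewrite sum_Sn, <- IH, hf by lia. now rewrite plus_zero_r.
Qed.

Lemma is_series_Re_Im (a : nat -> C) (l : C) :
  is_series (V := C_NormedModule) a l ->
  is_series (fun k => Re (a k)) (Re l) /\ is_series (fun k => Im (a k)) (Im l).
Proof.
  intros h. unfold is_series in *.
  assert (hpart : forall N, sum_n a N = (sum_n (fun k => Re (a k)) N,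
                                         sum_n (fun k => Im (a k)) N)).
  { induction N as [|N IH]; [now rewrite !sum_O; destruct (a 0%nat)|].
    rewrite !sum_Sn, IH. now destruct (a (S N)). }
  split.
  - apply filterlim_ext with (fun N => Re (sum_n a N)); [intros N; now rewrite hpart|].
    eapply filterlim_comp; [exact h|].
    intros P [eps hP]. exists eps. intros y [hRe _]. now apply hP.
  - apply filterlim_ext with (fun N => Im (sum_n a N)); [intros N; now rewrite hpart|].
    eapply filterlim_comp; [exact h|].
    intros P [eps hP]. exists eps. intros y [_ hIm]. now apply hP.
Qed.

Lemma real_power_series_zero (u : nat -> R) :
  (forall x : R, Rabs x < 1 -> is_series (fun k => u k * x ^ k) 0) ->
  forall k, u k = 0.
Proof.
  intros h k.
  assert (hrad : Rbar_lt 0 (CV_radius u)).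
  { destruct (Rbar_lt_dec (CV_radius u) (Rabs (/ 2))) as [hlt|hge].
    - exfalso. apply (CV_disk_outside u (/ 2) hlt), ex_series_lim_0.
      eexists. apply h. rewrite Rabs_pos_eq; lra.
    - rewrite Rabs_pos_eq in hge by lra.
      destruct (CV_radius u) as [r| |]; simpl in *; auto; lra. }
  change 0 with ((fun _ : nat => 0) k).
  apply PSeries_ext_recip; [exact hrad| rewrite CV_radius_const_0; exact I |].
  exists (mkposreal 1 Rlt_0_1). intros y hy.
  rewrite PSeries_const_0. apply is_series_unique, h.
  change (Rabs (y - 0) < 1) in hy. now rewrite Rminus_0_r in hy.
Qed.

Lemma Cpow_RtoC (x : R) (k : nat) : Cpow (RtoC x) k = RtoC (x ^ k).
Proof. induction k as [|k IH]; simpl; [reflexivity|]. now rewrite IH, RtoC_mult. Qed.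

(* Identity theorem for complex power series on the unit disk, obtained by
   restricting to the real diameter and taking real and imaginary parts. *)
Lemma power_series_zero (d : nat -> C) :
  (forall z : C, Cmod z < 1 ->
     is_series (V := C_NormedModule) (fun k => (d k * Cpow z k)%C) (RtoC 0)) ->
  forall k, d k = RtoC 0.
Proof.
  intros h.
  assert (hparts : forall x, Rabs x < 1 ->
     is_series (fun k => Re (d k) * x ^ k) 0 /\ is_series (fun k => Im (d k) * x ^ k) 0).
  { intros x hx.
    destruct (is_series_Re_Im _ _ (h (RtoC x) ltac:(now rewrite Cmod_R))) as [hRe hIm].
    split; [eapply is_series_ext; [|exact hRe] | eapply is_series_ext; [|exact hIm]];
      intros k; cbv beta; rewrite Cpow_RtoC; destruct (d k) as [re im]; simpl; ring. }
  intros k.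
  assert (hRe := real_power_series_zero (fun k => Re (d k)) (fun x hx => proj1 (hparts x hx)) k).
  assert (hIm := real_power_series_zero (fun k => Im (d k)) (fun x hx => proj2 (hparts x hx)) k).
  cbv beta in hRe, hIm. destruct (d k) as [re im]. simpl in hRe, hIm. now subst.
Qed.

Lemma peval_sum_n (p : nat -> C) (n : nat) (z : C) :
  peval p n z = sum_n (fun k => (p k * Cpow z k)%C) n.
Proof.
  induction n as [|n IH]; [rewrite sum_O; simpl; ring|].
  rewrite sum_Sn. simpl. now rewrite IH.
Qed.

Lemma peval_is_series (p : nat -> C) (n : nat) (z : C) :
  (forall k, (n < k)%nat -> p k = RtoC 0) ->
  is_series (V := C_NormedModule) (fun k => (p k * Cpow z k)%C) (peval p n z).
Proof.
  intros hdeg. rewrite peval_sum_n.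
  apply (@is_series_finite C_AbsRing C_NormedModule).
  intros k hk. rewrite hdeg by lia. apply Cmult_0_l.
Qed.

(* Coefficients of the product (z - zeta) * sum_k c_k z^k. *)
Definition lin_factor_coef (zeta : C) (c : nat -> C) (k : nat) : C :=
  match k with
  | O => (- zeta * c O)%C
  | S j => (c j - zeta * c (S j))%C
  end.

Lemma is_series_lin_factor (zeta z g : C) (c : nat -> C) :
  is_series (V := C_NormedModule) (fun k => (c k * Cpow z k)%C) g ->
  is_series (V := C_NormedModule)
    (fun k => (lin_factor_coef zeta c k * Cpow z k)%C) ((z - zeta) * g)%C.
Proof.
  intros hg.
  assert (hshift : is_series (V := C_NormedModule)
     (fun k => match k with O => RtoC 0 | S j => (c j * Cpow z (S j))%C end) (z * g)%C).
  { apply is_series_decr_1.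
    change (is_series (V := C_NormedModule) (fun k => (c k * Cpow z (S k))%C)
              (z * g + - RtoC 0)%C).
    replace (z * g + - RtoC 0)%C with (@scal C_Ring C_ModuleSpace z g)
      by (change (z * g = z * g + - RtoC 0)%C; ring).
    eapply is_series_ext; [|apply (is_series_scal z _ _ hg)].
    intros k. change (z * (c k * Cpow z k) = c k * (z * Cpow z k))%C. ring. }
  replace ((z - zeta) * g)%C with (plus (z * g)%C (scal (- zeta)%C g))
    by (change (z * g + - zeta * g = (z - zeta) * g)%C; ring).
  eapply is_series_ext; [|exact (is_series_plus _ _ _ _ hshift (is_series_scal _ _ _ hg))].
  intros [|k]; cbn -[Cpow]; ring.
Qed.

(* Comparing coefficients in q(z) = a + (z - zeta) g(z): the coefficients of
   g obey the synthetic-division recursion c_k = zeta c_(k+1) + p_(k+1). *)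
Lemma Drep_coef_recursion (n : nat) (p : nat -> C) (zeta a : C) (c : nat -> C) :
  (forall k, (n < k)%nat -> p k = RtoC 0) ->
  Drep zeta (peval p n) a c ->
  forall k, c k = (zeta * c (S k) + p (S k))%C.
Proof.
  intros hdeg [_ hrep].
  set (const_coef := fun k => match k with O => a | S _ => RtoC 0 end).
  assert (hdiff : forall k,
      (lin_factor_coef zeta c k + const_coef k - p k)%C = RtoC 0).
  { apply power_series_zero. intros z hz.
    destruct (hrep z hz) as [gz [hg hf]].
    assert (hconst : is_series (V := C_NormedModule) (fun k => (const_coef k * Cpow z k)%C) a).
    { assert (h0 := @is_series_finite C_AbsRing C_NormedModule
                      (fun k => (const_coef k * Cpow z k)%C) 0
                      ltac:(intros [|k] hk; [lia|apply Cmult_0_l])).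
      rewrite sum_O in h0. simpl in h0. now rewrite Cmult_1_r in h0. }
    assert (htot := is_series_plus _ _ _ _
      (is_series_plus _ _ _ _ (is_series_lin_factor zeta z gz c hg) hconst)
      (is_series_opp _ _ (peval_is_series p n z hdeg))).
    replace (RtoC 0) with (plus (plus ((z - zeta) * gz)%C a) (opp (peval p n z)))
      by (rewrite hf; change ((z - zeta) * gz + a + - (a + (z - zeta) * gz) = RtoC 0)%C; ring).
    eapply is_series_ext; [|exact htot].
    intros k. change ((lin_factor_coef zeta c k * Cpow z k + const_coef k * Cpow z k)
                      + - (p k * Cpow z k) = (lin_factor_coef zeta c k + const_coef k - p k) * Cpow z k)%C.
    ring. }
  intros k. specialize (hdiff (S k)). simpl in hdiff.
  apply (f_equal (fun t => t + (zeta * c (S k) + p (S k)))%C) in hdiff.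
  rewrite Cplus_0_l in hdiff. rewrite <- hdiff. ring.
Qed.

Lemma nondecreasing_tail_le_lim (u : nat -> R) (n : nat) :
  (forall k, (n <= k)%nat -> u k <= u (S k)) -> is_lim_seq u 0 ->
  forall k, (n <= k)%nat -> u k <= 0.
Proof.
  intros hmono hlim k hk.
  assert (hup : forall m, u k <= u (m + k)%nat).
  { induction m as [|m IH]; simpl; [lra|].
    eapply Rle_trans; [exact IH|]. apply hmono. lia. }
  apply (is_lim_seq_le (fun _ => u k) (fun m => u (m + k)%nat) (u k) 0 hup).
  - apply is_lim_seq_const.
  - now apply is_lim_seq_incr_n.
Qed.

(* When |zeta| <= 1, the recursion reads c_k = zeta c_(k+1) beyond the degree,
   so |c_k| is nondecreasing there; square summability forces c_k = 0. *)
Lemma quotient_tail_zero (n : nat) (p c : nat -> C) (zeta : C) :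
  (forall k, (n < k)%nat -> p k = RtoC 0) -> Cmod zeta <= 1 ->
  (forall k, c k = (zeta * c (S k) + p (S k))%C) -> inH2 c ->
  forall k, (n <= k)%nat -> c k = RtoC 0.
Proof.
  intros hdeg hzeta hrec hH2 k hk.
  apply Cmod_eq_0, (Rsqr_eq_0 (Cmod (c k))). unfold Rsqr.
  apply Rle_antisym; [|apply Rle_0_sqr].
  replace (Cmod (c k) * Cmod (c k)) with (Cmod (c k) ^ 2) by ring.
  apply (nondecreasing_tail_le_lim (fun k => Cmod (c k) ^ 2) n);
    [|apply ex_series_lim_0, hH2 | exact hk].
  intros j hj. apply pow_incr. split; [apply Cmod_ge_0|].
  rewrite (hrec j), (hdeg (S j)) by lia. rewrite Cplus_0_r, Cmod_mult.
  pose proof (Cmod_ge_0 (c (S j))). nra.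
Qed.

Lemma backward_recursion_bound (u x : nat -> R) (n : nat) :
  (forall k, u k <= u (S k) + x (S k)) -> (forall k, (n <= k)%nat -> u k <= 0) ->
  forall j, u j <= sum_n_m x (S j) n.
Proof.
  intros hstep htail j. remember (n - j)%nat as d eqn:hd. revert j hd.
  induction d as [|d IH]; intros j hd.
  - rewrite sum_n_m_zero by lia. apply htail. lia.
  - rewrite sum_Sn_m by lia. change (plus ?a ?b) with (a + b).
    specialize (IH (S j) ltac:(lia)). specialize (hstep j). lra.
Qed.

Lemma sum_n_m_nonneg (x : nat -> R) (a b : nat) :
  (forall k, 0 <= x k) -> 0 <= sum_n_m x a b.
Proof.
  intros hx. apply Rle_trans with (sum_n_m (fun _ => 0) a b).
  - apply Req_le. symmetry. exact (sum_n_m_const_zero (G := R_AbelianMonoid) a b).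
  - now apply sum_n_m_le.
Qed.

Lemma sum_n_m_suffix_le (x : nat -> R) (i j n : nat) :
  (forall k, 0 <= x k) -> (i <= j)%nat -> sum_n_m x j n <= sum_n_m x i n.
Proof.
  intros hx hij. destruct (Nat.le_gt_cases j (S n)) as [hjn|hjn].
  - destruct j as [|j]; [replace i with 0%nat by lia; lra|].
    rewrite (sum_n_m_Chasles x i j n) by lia. change (plus ?a ?b) with (a + b).
    pose proof (sum_n_m_nonneg x i j hx). lra.
  - rewrite sum_n_m_zero by lia. now apply sum_n_m_nonneg.
Qed.

Lemma sum_cross_term_le (x : nat -> R) (m : nat) (y : R) :
  2 * sum_n_m x 1 m * y <= sum_n_m (fun k => x k ^ 2) 1 m + INR m * y ^ 2.
Proof.
  induction m as [|m IH].
  - rewrite !sum_n_m_zero by lia. unfold zero. simpl. lra.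
  - rewrite (sum_n_Sm x), (sum_n_Sm (fun k => x k ^ 2)) by lia.
    change (plus ?a ?b) with (a + b). rewrite S_INR.
    pose proof (pow2_ge_0 (x (S m) - y)). nra.
Qed.

Lemma cauchy_schwarz_sum (x : nat -> R) (m : nat) :
  (sum_n_m x 1 m) ^ 2 <= INR m * sum_n_m (fun k => x k ^ 2) 1 m.
Proof.
  induction m as [|m IH].
  - rewrite !sum_n_m_zero by lia. unfold zero. simpl. lra.
  - rewrite (sum_n_Sm x), (sum_n_Sm (fun k => x k ^ 2)) by lia.
    change (plus ?a ?b) with (a + b). rewrite S_INR.
    pose proof (sum_cross_term_le x m (x (S m))). nra.
Qed.

(* Each coefficient of the quotient is bounded by the l^1 norm of p_1, ..., p_n,
   hence by Cauchy-Schwarz its square is at most n times the H^2 norm of q. *)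
Lemma quotient_coef_bound (n : nat) (p c : nat -> C) (zeta : C) :
  Cmod zeta <= 1 -> (forall k, c k = (zeta * c (S k) + p (S k))%C) ->
  (forall k, (n <= k)%nat -> c k = RtoC 0) ->
  forall j, Cmod (c j) ^ 2 <= INR n * H2norm2_poly p n.
Proof.
  intros hzeta hrec htail j.
  set (x := fun k => Cmod (p k)).
  assert (hx : forall k, 0 <= x k) by (intros k; apply Cmod_ge_0).
  assert (hstep : forall k, Cmod (c k) <= Cmod (c (S k)) + x (S k)).
  { intros k. rewrite (hrec k). eapply Rle_trans; [apply Cmod_triangle|].
    rewrite Cmod_mult. pose proof (Cmod_ge_0 (c (S k))). unfold x. nra. }
  assert (hl1 : Cmod (c j) <= sum_n_m x 1 n).
  { eapply Rle_trans.
    - apply (backward_recursion_bound (fun k => Cmod (c k)) x n hstep).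
      intros k hk. rewrite htail, Cmod_0 by exact hk. lra.
    - apply sum_n_m_suffix_le; [exact hx|lia]. }
  assert (hl2 : sum_n_m (fun k => x k ^ 2) 1 n <= H2norm2_poly p n).
  { apply (sum_n_m_suffix_le (fun k => x k ^ 2) 0 1 n); [intros k; apply pow2_ge_0|lia]. }
  pose proof (cauchy_schwarz_sum x n). pose proof (pos_INR n).
  assert (Cmod (c j) ^ 2 <= (sum_n_m x 1 n) ^ 2)
    by (apply pow_incr; split; [apply Cmod_ge_0|exact hl1]).
  nra.
Qed.

Lemma H2norm2_finite (c : nat -> C) (n : nat) :
  (forall k, (n <= k)%nat -> c k = RtoC 0) ->
  H2norm2 c = sum_n (fun k => Cmod (c k) ^ 2) n.
Proof.
  intros htail. apply is_series_unique, (@is_series_finite R_AbsRing R_NormedModule).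
  intros k hk. rewrite htail, Cmod_0 by lia. simpl. apply Rmult_0_l.
Qed.

Lemma sum_n_support_bound (f : nat -> R) (M : R) (n : nat) :
  0 <= M -> (forall k, f k <= M) -> (forall k, (n <= k)%nat -> f k = 0) ->
  forall m, sum_n f m <= INR (Nat.min (S m) n) * M.
Proof.
  intros hM hle htail m. induction m as [|m IH].
  - rewrite sum_O. destruct n as [|n].
    + rewrite htail by lia. simpl. lra.
    + replace (Nat.min 1 (S n)) with 1%nat by lia. simpl. rewrite Rmult_1_l. apply hle.
  - rewrite sum_Sn. change (plus ?a ?b) with (a + b).
    destruct (Nat.lt_ge_cases (S m) n) as [hlt|hge].
    + replace (Nat.min (S (S m)) n) with (S (Nat.min (S m) n)) by lia.
      rewrite S_INR. specialize (hle (S m)). lra.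
    + replace (Nat.min (S (S m)) n) with (Nat.min (S m) n) by lia.
      rewrite (htail (S m)) by exact hge. lra.
Qed.

(* Synthetic division of q by z - zeta: the quotient coefficients are computed
   downwards from c_n = 0 by c_(k-1) = zeta c_k + p_k;  quot_from_top p zeta n d
   is c_(n-d). *)
Fixpoint quot_from_top (p : nat -> C) (zeta : C) (n d : nat) : C :=
  match d with
  | O => RtoC 0
  | S d' => (zeta * quot_from_top p zeta n d' + p (n - d')%nat)%C
  end.

Definition synth_quot (p : nat -> C) (zeta : C) (n k : nat) : C :=
  quot_from_top p zeta n (n - k).

Lemma synth_quot_zero (p : nat -> C) (zeta : C) (n k : nat) :
  (n <= k)%nat -> synth_quot p zeta n k = RtoC 0.
Proof. intros hk. unfold synth_quot. now replace (n - k)%nat with 0%nat by lia. Qed.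

Lemma synth_quot_recursion (p : nat -> C) (zeta : C) (n : nat) :
  (forall k, (n < k)%nat -> p k = RtoC 0) ->
  forall k, synth_quot p zeta n k = (zeta * synth_quot p zeta n (S k) + p (S k))%C.
Proof.
  intros hdeg k. destruct (Nat.lt_ge_cases k n) as [hk|hk].
  - unfold synth_quot. replace (n - k)%nat with (S (n - S k)) by lia. simpl.
    now replace (n - (n - S k))%nat with (S k) by lia.
  - rewrite !synth_quot_zero, hdeg by lia. ring.
Qed.

Lemma lin_factor_telescope (p c : nat -> C) (zeta z : C) :
  (forall k, c k = (zeta * c (S k) + p (S k))%C) -> forall m,
  ((z - zeta) * sum_n (fun k => c k * Cpow z k) m
   = c m * Cpow z (S m) + peval p m z - p 0%nat - zeta * c 0%nat)%C.
Proof.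
  intros hrec m. induction m as [|m IH].
  - rewrite sum_O. simpl. ring.
  - rewrite sum_Sn. change (plus ?a ?b) with (a + b)%C.
    rewrite Cmult_plus_distr_l, IH, (hrec m). simpl. ring.
Qed.

(* Every polynomial q lies in D_zeta: q = q(zeta) + (z - zeta) g with g the
   (polynomial) synthetic-division quotient. *)
Lemma Drep_exists (n : nat) (p : nat -> C) (zeta : C) :
  (forall k, (n < k)%nat -> p k = RtoC 0) ->
  exists (a : C) (c : nat -> C), Drep zeta (peval p n) a c.
Proof.
  intros hdeg. set (c := synth_quot p zeta n).
  exists (p 0%nat + zeta * c 0%nat)%C, c. split.
  - exists (sum_n (fun k => Cmod (c k) ^ 2) n).
    apply (@is_series_finite R_AbsRing R_NormedModule).
    intros k hk. unfold c. rewrite synth_quot_zero, Cmod_0 by lia. simpl. apply Rmult_0_l.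
  - intros z _. exists (sum_n (fun k => c k * Cpow z k)%C n). split.
    + apply (@is_series_finite C_AbsRing C_NormedModule).
      intros k hk. unfold c. rewrite synth_quot_zero by lia. apply Cmult_0_l.
    + rewrite (lin_factor_telescope p c zeta z (synth_quot_recursion p zeta n hdeg) n).
      unfold c. rewrite (synth_quot_zero p zeta n n) by lia. ring.
Qed.

Theorem lemma3p1 (n : nat) (p : nat -> C) (zeta : C)
  (hdeg : forall k : nat, (n < k)%nat -> p k = RtoC 0)
  (hlead : p n <> RtoC 0)
  (hzeta : (Cmod zeta <= 1)%R) :
  (exists (a : C) (c : nat -> C), Drep zeta (peval p n) a c) /\
  (forall (a : C) (c : nat -> C), Drep zeta (peval p n) a c ->
     (H2norm2 c <= (INR n) ^ 2 * H2norm2_poly p n)%R).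
Proof.
  split; [exact (Drep_exists n p zeta hdeg)|].
  intros a c hrep.
  assert (hrec := Drep_coef_recursion n p zeta a c hdeg hrep).
  assert (htail := quotient_tail_zero n p c zeta hdeg hzeta hrec (proj1 hrep)).
  assert (hcoef := quotient_coef_bound n p c zeta hzeta hrec htail).
  assert (hM : 0 <= INR n * H2norm2_poly p n).
  { apply Rmult_le_pos; [apply pos_INR|].
    apply sum_n_m_nonneg. intros k. apply pow2_ge_0. }
  rewrite (H2norm2_finite c n htail).
  eapply Rle_trans.
  - apply (sum_n_support_bound (fun k => Cmod (c k) ^ 2) _ n hM hcoef).
    intros k hk. rewrite htail, Cmod_0 by exact hk. simpl. lra.
  - replace (Nat.min (S n) n) with n by lia. right. ring.
Qed.
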